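(* Let $G$ be a connected affine algebraic group acting on an affine variety $X$, and let $X=\bigcup_{i=1}^n X_i$ be the decomposition of $X$ into irreducible components. Then the action $G\times X\to X$ is observable if and only if each restricted action $G\times X_i\to X_i$ ($i=1,\dots,n$) is observable.
   Context: $\Bbbk$ is algebraically closed; varieties are reduced. Since $G$ is connected, each irreducible component $X_i$ is $G$-stable. An action of $G$ on an affine variety $Y$ is called observable if for every nonzero $G$-stable ideal $I\subset\Bbbk[Y]$ one has $I^G\neq(0)$, where $I^G$ denotes the $G$-invariant elements of $I$ under $(g\cdot f)(y)=f(g^{-1}y)$. *)

From mathcomp Require Import all_boot all_algebra.
From mathcomp Require Import mpoly.
Set Implicit Arguments. Unset Strict Implicit. Unset Printing Implicit Defensive.
Import GRing.Theory.
Local Open Scope ring_scope.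

(* Points of affine n-space k^n are functions 'I_n -> k; subsets are predicates. *)

Definition pjoin (k : Type) (N m : nat) (g : 'I_N -> k) (x : 'I_m -> k)
  : 'I_(N + m) -> k :=
  fun i => match split i with inl a => g a | inr b => x b end.

Definition zariski_closed (k : fieldType) (m : nat) (Z : ('I_m -> k) -> Prop) : Prop :=
  exists S : {mpoly k[m]} -> Prop,
    forall x, Z x <-> (forall p, S p -> p.@[x] = 0).

Definition regular_map1 (k : fieldType) (N r : nat) (D : ('I_N -> k) -> Prop)
  (f : ('I_N -> k) -> ('I_r -> k)) : Prop :=
  exists P : 'I_r -> {mpoly k[N]}, forall g, D g -> forall j, f g j = (P j).@[g].

Definition regular_map2 (k : fieldType) (N m r : nat)
  (D : ('I_N -> k) -> ('I_m -> k) -> Prop)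
  (f : ('I_N -> k) -> ('I_m -> k) -> ('I_r -> k)) : Prop :=
  exists P : 'I_r -> {mpoly k[N + m]},
    forall g x, D g x -> forall j, f g x j = (P j).@[pjoin g x].

Definition is_affine_group (k : fieldType) (N : nat) (G : ('I_N -> k) -> Prop)
  (mul : ('I_N -> k) -> ('I_N -> k) -> ('I_N -> k))
  (inv : ('I_N -> k) -> ('I_N -> k)) (e : 'I_N -> k) : Prop :=
  zariski_closed G /\ G e
  /\ (forall g h, G g -> G h -> G (mul g h))
  /\ (forall g, G g -> G (inv g))
  /\ (forall g h l, G g -> G h -> G l -> mul g (mul h l) = mul (mul g h) l)
  /\ (forall g, G g -> mul e g = g /\ mul g e = g)
  /\ (forall g, G g -> mul (inv g) g = e /\ mul g (inv g) = e)
  /\ regular_map2 (fun g h => G g /\ G h) mul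
  /\ regular_map1 G inv.

Definition zariski_connected (k : fieldType) (N : nat) (G : ('I_N -> k) -> Prop) : Prop :=
  forall A B : ('I_N -> k) -> Prop, zariski_closed A -> zariski_closed B ->
    (forall g, G g -> A g \/ B g) -> (forall g, G g -> A g -> B g -> False) ->
    (forall g, G g -> A g) \/ (forall g, G g -> B g).

Definition is_regular_action (k : fieldType) (N m : nat) (G : ('I_N -> k) -> Prop)
  (mul : ('I_N -> k) -> ('I_N -> k) -> ('I_N -> k)) (e : 'I_N -> k)
  (X : ('I_m -> k) -> Prop) (act : ('I_N -> k) -> ('I_m -> k) -> ('I_m -> k)) : Prop :=
  (forall g x, G g -> X x -> X (act g x))
  /\ (forall x, X x -> act e x = x)
  /\ (forall g h x, G g -> G h -> X x -> act (mul g h) x = act g (act h x))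
  /\ regular_map2 (fun g x => G g /\ X x) act.

Definition zariski_irreducible (k : fieldType) (m : nat) (Y : ('I_m -> k) -> Prop) : Prop :=
  (exists y, Y y) /\
  forall A B : ('I_m -> k) -> Prop, zariski_closed A -> zariski_closed B ->
    (forall y, Y y -> A y \/ B y) -> (forall y, Y y -> A y) \/ (forall y, Y y -> B y).

Definition irreducible_component (k : fieldType) (m : nat) (X Y : ('I_m -> k) -> Prop) : Prop :=
  zariski_closed Y /\ (forall y, Y y -> X y) /\ zariski_irreducible Y /\
  (forall Z, zariski_closed Z -> zariski_irreducible Z ->
     (forall y, Y y -> Z y) -> (forall y, Z y -> X y) -> forall y, Z y -> Y y).

(* Ideals of k[Y] = k[x_1..x_m]/I(Y) are represented by ideals of
   k[x_1..x_m] containing the vanishing ideal I(Y). *)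
Definition coord_ideal (k : fieldType) (m : nat) (Y : ('I_m -> k) -> Prop)
  (I : {mpoly k[m]} -> Prop) : Prop :=
  (forall p, (forall y, Y y -> p.@[y] = 0) -> I p)
  /\ (forall p q, I p -> I q -> I (p + q))
  /\ (forall p q, I p -> I (q * p)).

(* nonzero in k[Y]: contains a function not vanishing identically on Y *)
Definition coord_ideal_nonzero (k : fieldType) (m : nat) (Y : ('I_m -> k) -> Prop)
  (I : {mpoly k[m]} -> Prop) : Prop :=
  exists p, I p /\ exists y, Y y /\ p.@[y] != 0.

(* G-stable for (g . f)(y) = f(g^-1 y) *)
Definition G_stable_ideal (k : fieldType) (N m : nat) (G : ('I_N -> k) -> Prop)
  (inv : ('I_N -> k) -> ('I_N -> k))
  (act : ('I_N -> k) -> ('I_m -> k) -> ('I_m -> k))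
  (Y : ('I_m -> k) -> Prop) (I : {mpoly k[m]} -> Prop) : Prop :=
  forall p g, I p -> G g ->
    exists q, I q /\ forall y, Y y -> q.@[y] = p.@[act (inv g) y].

Definition observable (k : fieldType) (N m : nat) (G : ('I_N -> k) -> Prop)
  (inv : ('I_N -> k) -> ('I_N -> k))
  (act : ('I_N -> k) -> ('I_m -> k) -> ('I_m -> k))
  (Y : ('I_m -> k) -> Prop) : Prop :=
  forall I : {mpoly k[m]} -> Prop,
    coord_ideal Y I -> G_stable_ideal G inv act Y I -> coord_ideal_nonzero Y I ->
    exists p, I p /\ (exists y, Y y /\ p.@[y] != 0) /\
      (forall g y, G g -> Y y -> p.@[act (inv g) y] = p.@[y]).

(* Because G is connected it maps every component X_i into itself: g X_i is again a
   component, and {g | g X_i ⊆ X_i}, {g | g X_i ⊆ U_i} with U_i the union of the other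
   components are disjoint closed sets covering G, the second one missing e.
   Hence functions on X vanishing on the G-stable set U_i restrict faithfully and
   G-equivariantly to X_i, and ideals of k[X] and k[X_i] correspond through them.
   A function h vanishing on U_i but not on X_i moves a nonzero element of either
   ideal into this correspondence, since X_i is irreducible, and an invariant
   vanishing on U_i is nonzero on X exactly when it is nonzero on X_i. *)

From mathcomp Require Import all_boot all_algebra.
From mathcomp Require Import mpoly.
From Stdlib Require Import Classical FunctionalExtensionality PropExtensionality.
Set Implicit Arguments. Unset Strict Implicit. Unset Printing Implicit Defensive.
Import GRing.Theory.
Local Open Scope ring_scope.

Section ZariskiTopology.
Variables (k : fieldType) (m : nat).
Implicit Types (A B Y Z : ('I_m -> k) -> Prop) (p q : {mpoly k[m]}).

Lemma zariski_closed_ext A B :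
  (forall x, A x <-> B x) -> zariski_closed A -> zariski_closed B.
Proof. by move=> AB [S HS]; exists S => x; rewrite -AB. Qed.

Lemma zariski_closed0 : zariski_closed (fun _ : 'I_m -> k => False).
Proof.
exists (fun p => p = 1) => x; split=> // /(_ 1 erefl) /eqP.
by rewrite meval1 oner_eq0.
Qed.

Lemma zariski_closed_zeros p : zariski_closed (fun x => p.@[x] = 0).
Proof. by exists (fun q => q = p) => x; split=> [px _ -> | ]; last apply. Qed.

Lemma zariski_closedU A B :
  zariski_closed A -> zariski_closed B -> zariski_closed (fun x => A x \/ B x).
Proof.
move=> [SA HA] [SB HB].
exists (fun r => exists p q, [/\ SA p, SB q & r = p * q]) => x; split.
  move=> ABx _ [p [q [Sp Sq ->]]]; rewrite mevalM.
  by case: ABx => [/HA/(_ p Sp)|/HB/(_ q Sq)] ->; rewrite ?mul0r ?mulr0.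
move=> Hx; have [|nAx] := classic (A x); first by left.
right; apply/HB => q Sq.
have [p [Sp px]] : exists p, SA p /\ p.@[x] != 0.
  apply: NNPP => Np; apply: nAx; apply/HA => p Sp.
  by apply: NNPP => px; apply: Np; exists p; split=> //; apply/eqP.
have /eqP := Hx (p * q) (ex_intro _ p (ex_intro _ q (And3 Sp Sq erefl))).
by rewrite mevalM mulf_eq0 (negbTE px) => /eqP.
Qed.

Lemma zariski_closed_bigcap (T : Type) (Z : T -> ('I_m -> k) -> Prop) :
  (forall t, zariski_closed (Z t)) -> zariski_closed (fun x => forall t, Z t x).
Proof.
move=> HZ; exists (fun p => exists t (S : {mpoly k[m]} -> Prop),
  (forall x, Z t x <-> (forall p, S p -> p.@[x] = 0)) /\ S p) => x; split.
  by move=> Zx p [t [S [HS Sp]]]; apply: (HS x).1 (Zx t) p Sp.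
by move=> Hx t; have [S HS] := HZ t; apply/HS => p Sp; apply: Hx; exists t, S.
Qed.

Lemma zariski_closed_bigcup (I : eqType) (s : seq I) (Z : I -> ('I_m -> k) -> Prop) :
  (forall j, zariski_closed (Z j)) ->
  zariski_closed (fun x => exists j, j \in s /\ Z j x).
Proof.
move=> HZ; elim: s => [|a s IHs].
  by apply: zariski_closed_ext zariski_closed0 => x; split=> // [[j []]].
apply: zariski_closed_ext (zariski_closedU (HZ a) IHs) => x; split.
  by case=> [Zax|[j [js Zjx]]]; [exists a; rewrite mem_head | exists j; rewrite inE js orbT].
by case=> j []; rewrite inE => /orP[/eqP-> | js] Zjx; [left | right; exists j].
Qed.

Lemma zariski_closed_separate Z y :
  zariski_closed Z -> ~ Z y ->
  exists p, (forall z, Z z -> p.@[z] = 0) /\ p.@[y] != 0.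
Proof.
move=> [S HS] nZy; have [p [Sp py]] : exists p, S p /\ p.@[y] != 0.
  apply: NNPP => Np; apply: nZy; apply/HS => p Sp.
  by apply: NNPP => py; apply: Np; exists p; split=> //; apply/eqP.
by exists p; split=> // z /HS; apply.
Qed.

Lemma irreducible_sub_bigcup (I : eqType) (s : seq I) (Z : I -> ('I_m -> k) -> Prop) Y :
  (forall j, zariski_closed (Z j)) -> zariski_irreducible Y ->
  (forall y, Y y -> exists j, j \in s /\ Z j y) ->
  exists j, j \in s /\ forall y, Y y -> Z j y.
Proof.
move=> HZ [[y0 Yy0] irrY]; elim: s => [|a s IHs] YZ; first by have [j []] := YZ y0 Yy0.
have YZ' y : Y y -> Z a y \/ exists j, j \in s /\ Z j y.
  by case/YZ=> j []; rewrite inE => /orP[/eqP-> | js]; [left | right; exists j].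
case: (irrY _ _ (HZ a) (zariski_closed_bigcup s HZ) YZ') => [YZa | /IHs[j [js YZj]]].
  by exists a; rewrite mem_head.
by exists j; rewrite inE js orbT.
Qed.

Lemma irreducible_mul_neq0 Y p q : zariski_irreducible Y ->
  (exists y, Y y /\ p.@[y] != 0) -> (exists y, Y y /\ q.@[y] != 0) ->
  exists y, Y y /\ (p * q).@[y] != 0.
Proof.
move=> [_ irrY] [y1 [Yy1 py1]] [y2 [Yy2 qy2]]; apply: NNPP => Npq.
have Ypq y : Y y -> p.@[y] = 0 \/ q.@[y] = 0.
  move=> Yy; apply: NNPP => Npqy; apply: Npq; exists y; split=> //.
  by rewrite mevalM mulf_neq0 //; apply/eqP => pqy; apply: Npqy; [left | right].
case: (irrY _ _ (zariski_closed_zeros p) (zariski_closed_zeros q) Ypq).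
  by move/(_ y1 Yy1)/eqP; rewrite (negbTE py1).
by move/(_ y2 Yy2)/eqP; rewrite (negbTE qy2).
Qed.

End ZariskiTopology.

Lemma zariski_closed_preimage (k : fieldType) (m r : nat) (D : ('I_m -> k) -> Prop)
    (A : ('I_r -> k) -> Prop) (F : ('I_m -> k) -> 'I_r -> k) :
  zariski_closed D -> zariski_closed A ->
  (forall p : {mpoly k[r]}, exists c : {mpoly k[m]},
     forall x, D x -> c.@[x] = p.@[F x]) ->
  zariski_closed (fun x => D x /\ A (F x)).
Proof.
move=> [SD HD] [SA HA] pullF.
exists (fun c => SD c \/ exists p, SA p /\ forall x, D x -> c.@[x] = p.@[F x]) => x.
split=> [[Dx AFx] c [SDc | [p [Sp ->//]]] | Hx]; first exact: (HD x).1.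
  exact: (HA _).1.
have Dx : D x by apply/HD => c SDc; apply: Hx; left.
split=> //; apply/HA => p Sp; have [c Hc] := pullF p.
by rewrite -Hc //; apply: Hx; right; exists p.
Qed.

Lemma regular_map2_pullback (k : fieldType) (N m r l : nat)
    (D : ('I_N -> k) -> ('I_m -> k) -> Prop)
    (f : ('I_N -> k) -> ('I_m -> k) -> 'I_r -> k)
    (u : ('I_l -> k) -> 'I_N -> k) (v : ('I_l -> k) -> 'I_m -> k)
    (Q : 'I_(N + m) -> {mpoly k[l]}) :
  regular_map2 D f -> (forall z i, pjoin (u z) (v z) i = (Q i).@[z]) ->
  forall p : {mpoly k[r]}, exists c : {mpoly k[l]},
    forall z, D (u z) (v z) -> c.@[z] = p.@[f (u z) (v z)].
Proof.
move=> [P HP] HQ p.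
exists (p \mPo [tuple P j \mPo [tuple Q i | i < N + m] | j < r]) => z Dz.
rewrite comp_mpoly_meval; apply: meval_eq => j.
rewrite tnth_mktuple HP // comp_mpoly_meval; apply: meval_eq => i.
by rewrite tnth_mktuple HQ.
Qed.

Lemma regular_map2_pullback_snd (k : fieldType) (N m r : nat) D
    (f : ('I_N -> k) -> ('I_m -> k) -> 'I_r -> k) (g : 'I_N -> k) :
  regular_map2 D f -> forall p : {mpoly k[r]}, exists c : {mpoly k[m]},
    forall x, D g x -> c.@[x] = p.@[f g x].
Proof.
move=> regf; apply: (regular_map2_pullback (u := fun=> g) (v := id) regf
  (Q := fun i => match split i with inl a => (g a)%:MP | inr b => 'X_b end)).
by move=> x i; rewrite /pjoin; case: split => [a|b]; rewrite ?mevalC ?mevalXU.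
Qed.

Lemma regular_map2_pullback_fst (k : fieldType) (N m r : nat) D
    (f : ('I_N -> k) -> ('I_m -> k) -> 'I_r -> k) (x : 'I_m -> k) :
  regular_map2 D f -> forall p : {mpoly k[r]}, exists c : {mpoly k[N]},
    forall g, D g x -> c.@[g] = p.@[f g x].
Proof.
move=> regf; apply: (regular_map2_pullback (u := id) (v := fun=> x) regf
  (Q := fun i => match split i with inl a => 'X_a | inr b => (x b)%:MP end)).
by move=> g i; rewrite /pjoin; case: split => [a|b]; rewrite ?mevalC ?mevalXU.
Qed.

Lemma coord_ideal_eq_on (k : fieldType) (m : nat) (Y : ('I_m -> k) -> Prop)
    (I : {mpoly k[m]} -> Prop) (p q : {mpoly k[m]}) :
  coord_ideal Y I -> I q -> (forall y, Y y -> p.@[y] = q.@[y]) -> I p.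
Proof.
move=> [I0 [Iadd _]] Iq pq; rewrite -(subrK q p); apply: Iadd => //.
by apply: I0 => y Yy; rewrite mevalB pq // subrr.
Qed.

Section ActionOnComponents.
Variables (k : fieldType) (N m n : nat).
Variables (G : ('I_N -> k) -> Prop) (mul : ('I_N -> k) -> ('I_N -> k) -> 'I_N -> k).
Variables (inv : ('I_N -> k) -> 'I_N -> k) (e : 'I_N -> k).
Variables (X : ('I_m -> k) -> Prop) (act : ('I_N -> k) -> ('I_m -> k) -> 'I_m -> k).
Variable Xc : 'I_n -> ('I_m -> k) -> Prop.

Hypothesis groupG : is_affine_group G mul inv e.
Hypothesis actionX : is_regular_action G mul e X act.
Hypothesis closedX : zariski_closed X.
Hypothesis componentXc : forall i, irreducible_component X (Xc i).
Hypothesis Xc_inj : injective Xc.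
Hypothesis X_cover : forall x, X x <-> exists i, Xc i x.

Implicit Types (g h : 'I_N -> k) (x y : 'I_m -> k) (Y Z : ('I_m -> k) -> Prop).
Implicit Types (p q : {mpoly k[m]}).

Lemma groupV g : G g -> G (inv g).
Proof. by case: groupG => _ [_ [_ [Ginv _]]]; apply: Ginv. Qed.

Lemma act_in g x : G g -> X x -> X (act g x).
Proof. by case: actionX => actX _; apply: actX. Qed.

Lemma act_invK g x : G g -> X x -> act (inv g) (act g x) = x.
Proof.
move=> Gg Xx; case: groupG actionX => _ [_ [_ [_ [_ [_ [invg _]]]]]] [_ [act1 [actM _]]].
rewrite -actM //; last exact: groupV.
by case: (invg g Gg) => -> _; apply: act1.
Qed.

Lemma act_invKV g x : G g -> X x -> act g (act (inv g) x) = x.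
Proof.
move=> Gg Xx; case: groupG actionX => _ [_ [_ [_ [_ [_ [invg _]]]]]] [_ [act1 [actM _]]].
rewrite -actM //; last exact: groupV.
by case: (invg g Gg) => _ ->; apply: act1.
Qed.

Lemma act_pullback g p : G g ->
  exists c : {mpoly k[m]}, forall x, X x -> c.@[x] = p.@[act g x].
Proof.
case: actionX => _ [_ [_ regact]] Gg.
by have [c Hc] := regular_map2_pullback_snd g regact p; exists c => x Xx; apply: Hc.
Qed.

Lemma orbit_pullback x p : X x ->
  exists c : {mpoly k[N]}, forall g, G g -> c.@[g] = p.@[act g x].
Proof.
case: actionX => _ [_ [_ regact]] Xx.
by have [c Hc] := regular_map2_pullback_fst x regact p; exists c => g Gg; apply: Hc.
Qed.

Lemma Xc_closed i : zariski_closed (Xc i).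
Proof. by case: (componentXc i). Qed.

Lemma Xc_sub i x : Xc i x -> X x.
Proof. by case: (componentXc i) => _ [XiX _]; apply: XiX. Qed.

Lemma Xc_irreducible i : zariski_irreducible (Xc i).
Proof. by case: (componentXc i) => _ [_ []]. Qed.

Lemma Xc_subset_eq i j : (forall y, Xc i y -> Xc j y) -> i = j.
Proof.
move=> Xij; case: (componentXc i) => _ [_ [_ maxXi]].
apply: Xc_inj; apply: functional_extensionality => y.
apply: propositional_extensionality; split; first exact: Xij.
exact: maxXi (Xc_closed j) (Xc_irreducible j) Xij (@Xc_sub j) y.
Qed.

Lemma component_eq_Xc Y : irreducible_component X Y ->
  exists l, forall y, Y y <-> Xc l y.
Proof.
move=> [closedY [YX [irrY maxY]]].
have [l [_ YXl]] : exists l, l \in enum 'I_n /\ forall y, Y y -> Xc l y.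
  apply: irreducible_sub_bigcup Xc_closed irrY _ => y /YX/X_cover[j Xjy].
  by exists j; rewrite mem_enum.
exists l => y; split; first exact: YXl.
exact: maxY (Xc_closed l) (Xc_irreducible l) YXl (@Xc_sub l) y.
Qed.

Definition other_components i y := exists j, j != i /\ Xc j y.

Lemma other_componentsE i y :
  other_components i y <-> exists j, j \in [seq j <- enum 'I_n | j != i] /\ Xc j y.
Proof.
by split=> -[j [ji Xjy]]; exists j; move: ji; rewrite mem_filter mem_enum andbT.
Qed.

Lemma other_components_closed i : zariski_closed (other_components i).
Proof.
apply: zariski_closed_ext (zariski_closed_bigcup _ Xc_closed) => y.
exact: iff_sym (other_componentsE i y).
Qed.

Lemma Xc_not_sub_other i : ~ (forall y, Xc i y -> other_components i y).
Proof.
move=> XiU.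
have [j [+ Xij]] := irreducible_sub_bigcup Xc_closed (Xc_irreducible i)
  (fun y Xiy => (other_componentsE i y).1 (XiU y Xiy)).
by rewrite mem_filter (Xc_subset_eq Xij) eqxx.
Qed.

Lemma separating_poly i : exists p,
  (forall y, other_components i y -> p.@[y] = 0) /\ exists y, Xc i y /\ p.@[y] != 0.
Proof.
have [y [Xiy nUy]] : exists y, Xc i y /\ ~ other_components i y.
  apply: NNPP => Ny; apply: (@Xc_not_sub_other i) => y Xiy.
  by apply: NNPP => nUy; apply: Ny; exists y.
have [p [pU py]] := zariski_closed_separate (other_components_closed i) nUy.
by exists p; split=> //; exists y.
Qed.


Lemma localize_on_component i p : (exists y, Xc i y /\ p.@[y] != 0) ->
  exists q, (forall y, other_components i y -> (p * q).@[y] = 0) /\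
            exists y, Xc i y /\ (p * q).@[y] != 0.
Proof.
move=> pnz; have [q [qU qnz]] := separating_poly i; exists q; split.
  by move=> y Uy; rewrite mevalM qU ?mulr0.
exact: irreducible_mul_neq0 (Xc_irreducible i) pnz qnz.
Qed.

Definition act_preimage h Z x := X x /\ Z (act h x).

Lemma act_preimage_closed h Z : G h -> zariski_closed Z ->
  zariski_closed (act_preimage h Z).
Proof.
by move=> Gh closedZ; apply: zariski_closed_preimage closedX closedZ _ => p; apply: act_pullback.
Qed.

Lemma act_preimage_irreducible h Z : G h -> zariski_irreducible Z ->
  (forall z, Z z -> X z) -> zariski_irreducible (act_preimage h Z).
Proof.
move=> Gh [[z0 Zz0] irrZ] ZX; have Gh' := groupV Gh; have Xz0 := ZX z0 Zz0; split.
  by exists (act (inv h) z0); split; [apply: act_in | rewrite act_invKV].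
move=> A B closedA closedB AB.
have ABh z : Z z -> act_preimage (inv h) A z \/ act_preimage (inv h) B z.
  move=> Zz; have Xz := ZX z Zz.
  have /AB[] : act_preimage h Z (act (inv h) z) by split; [apply: act_in | rewrite act_invKV].
    by left. by right.
have [AZ|BZ] := irrZ _ _ (act_preimage_closed Gh' closedA) (act_preimage_closed Gh' closedB) ABh.
  by left => x [Xx /AZ[_]]; rewrite act_invK.
by right => x [Xx /BZ[_]]; rewrite act_invK.
Qed.

Lemma act_preimage_component h Y : G h -> irreducible_component X Y ->
  irreducible_component X (act_preimage h Y).
Proof.
move=> Gh [closedY [YX [irrY maxY]]]; have Gh' := groupV Gh.
split; first exact: act_preimage_closed.
split; first by move=> y [].
split; first exact: act_preimage_irreducible.
move=> Z closedZ irrZ YhZ ZX.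
have YZ y : Y y -> act_preimage (inv h) Z y.
  move=> Yy; have Xy := YX y Yy; split=> //; apply: YhZ.
  by split; [apply: act_in | rewrite act_invKV].
have ZY := maxY _ (act_preimage_closed Gh' closedZ)
  (act_preimage_irreducible Gh' irrZ ZX) YZ (fun y => @proj1 (X y) _).
move=> z Zz; have Xz := ZX z Zz; split=> //; apply: ZY.
by split; [apply: act_in | rewrite act_invK].
Qed.

Lemma Xc_translate i g : G g -> exists l,
  (forall y, Xc i y -> Xc l (act g y)) /\ (forall y, Xc l y -> Xc i (act (inv g) y)).
Proof.
move=> Gg; have [l gXi] := component_eq_Xc (act_preimage_component (groupV Gg) (componentXc i)).
exists l; split=> [y Xiy | y /gXi[] //].
have Xy := Xc_sub Xiy; apply/gXi; split; [exact: act_in | by rewrite act_invK].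
Qed.

Lemma transporter_closed Y Z : (forall y, Y y -> X y) -> zariski_closed Z ->
  zariski_closed (fun g => G g /\ forall y, Y y -> Z (act g y)).
Proof.
move=> YX closedZ; case: groupG => closedG _.
apply: zariski_closed_ext
  (zariski_closed_bigcap (Z := fun y g => G g /\ (Y y -> Z (act g y))) _) => [g | y].
  split=> [YgZ | [Gg YgZ] y]; last by split=> // /YgZ.
  by split=> [|y]; [case: (YgZ (fun=> 0)) | case: (YgZ y)].
have [Yy | nYy] := classic (Y y); last first.
  by apply: zariski_closed_ext closedG => g; split=> [|[]//]; split.
apply: zariski_closed_ext (zariski_closed_preimage (F := fun g => act g y) closedG closedZ
  (fun p => orbit_pullback p (YX y Yy))) => g.
by split=> -[Gg gZ]; split=> //; apply: gZ.
Qed.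

Section Connected.
Hypothesis connectedG : zariski_connected G.

Lemma Xc_stable i g x : G g -> Xc i x -> Xc i (act g x).
Proof.
move=> Gg Xix.
pose C h := G h /\ forall y, Xc i y -> Xc i (act h y).
pose D h := G h /\ forall y, Xc i y -> other_components i (act h y).
have closedC : zariski_closed C by apply: transporter_closed (@Xc_sub i) (Xc_closed i).
have closedD : zariski_closed D.
  exact: transporter_closed (@Xc_sub i) (other_components_closed i).
have CD h : G h -> C h \/ D h.
  move=> Gh; have [l [Xil _]] := Xc_translate i Gh.
  have [li | li] := eqVneq l i; [left | right]; split=> // y /Xil Xly.
    by rewrite -li.
  by exists l.
have nCD h : G h -> C h -> D h -> False.
  move=> Gh [_ hXi] [_ hU]; have [l [_ Xli]] := Xc_translate i Gh.
  have hinvK y : Xc l y -> act h (act (inv h) y) = y by move/Xc_sub; apply: act_invKV.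
  have li : l = i.
    by apply: Xc_subset_eq => y Xly; rewrite -(hinvK y Xly); apply: hXi; apply: Xli.
  subst l; apply: (@Xc_not_sub_other i) => y Xiy.
  by rewrite -(hinvK y Xiy); apply: hU; apply: Xli.
case: (connectedG closedC closedD CD nCD) => [allC | allD].
  by case: (allC g Gg) => _; apply.
case: (@Xc_not_sub_other i) => y0 Xiy0; case: groupG actionX => _ [Ge _] [_ [act1 _]].
by case: (allD e Ge) => _ /(_ y0 Xiy0); rewrite act1 //; apply: Xc_sub Xiy0.
Qed.

Lemma other_components_stable i g y : G g ->
  other_components i y -> other_components i (act g y).
Proof. by move=> Gg [j [ji Xjy]]; exists j; split=> //; apply: Xc_stable. Qed.

Lemma observable_component i :
  observable G inv act X -> observable G inv act (Xc i).
Proof.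
move=> obsX I idealI stableI [p0 [Ip0 p0nz]]; have [I0 [Iadd Imul]] := idealI.
pose J p := I p /\ forall y, other_components i y -> p.@[y] = 0.
have idealJ : coord_ideal X J.
  split; [|split].
  - move=> p pX; split; first by apply: I0 => y /Xc_sub; apply: pX.
    by move=> y [j [_ /Xc_sub]]; apply: pX.
  - by move=> p q [Ip pU] [Iq qU]; split=> [|y Uy]; rewrite ?mevalD ?pU ?qU ?addr0 //; apply: Iadd.
  - by move=> p q [Ip pU]; split=> [|y Uy]; rewrite ?mevalM ?pU ?mulr0 //; apply: Imul.
have stableJ : G_stable_ideal G inv act X J.
  move=> p g [Ip pU] Gg; have [c pc] := act_pullback p (groupV Gg).
  exists c; split=> //; split=> [|y Uy].
    have [q [Iq pq]] := stableI p g Ip Gg.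
    by apply: coord_ideal_eq_on idealI Iq _ => y Xiy; rewrite pc ?pq //; apply: Xc_sub Xiy.
  have [j [_ /Xc_sub Xy]] := Uy.
  by rewrite pc //; apply: pU; apply: other_components_stable (groupV Gg) Uy.
have [h [p0hU [y [Xiy p0hy]]]] := localize_on_component p0nz.
have nzJ : coord_ideal_nonzero X J.
  exists (p0 * h); split; last by exists y; split=> //; apply: Xc_sub Xiy.
  by split=> //; rewrite mulrC; apply: Imul.
have [p [[Ip pU] [[z [Xz pz]] p_inv]]] := obsX J idealJ stableJ nzJ.
exists p; split=> //; split; last by move=> g x Gg /Xc_sub; apply: p_inv.
exists z; split=> //; have [j Xjz] := (X_cover z).1 Xz.
have [<- // | ji] := eqVneq j i.
by move: pz; rewrite pU ?eqxx //; exists j.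
Qed.

Lemma observable_of_components :
  (forall i, observable G inv act (Xc i)) -> observable G inv act X.
Proof.
move=> obsXc I idealI stableI [p0 [Ip0 [x0 [Xx0 p0x0]]]]; have [I0 [Iadd Imul]] := idealI.
have [i Xix0] := (X_cover x0).1 Xx0.
pose J r := exists q, [/\ I q, forall y, other_components i y -> q.@[y] = 0
                       & forall y, Xc i y -> r.@[y] = q.@[y]].
have idealJ : coord_ideal (Xc i) J.
  split; [|split].
  - move=> r rXi; exists 0; split=> [|y _|y Xiy]; rewrite ?meval0 ?rXi //.
    by apply: I0 => y _; rewrite meval0.
  - move=> r s [q [Iq qU rq]] [q' [Iq' q'U sq']]; exists (q + q').
    split=> [|y Uy|y Xiy]; first exact: Iadd.
      by rewrite mevalD qU ?q'U ?addr0.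
    by rewrite !mevalD rq ?sq'.
  - move=> r s [q [Iq qU rq]]; exists (s * q).
    split=> [|y Uy|y Xiy]; first exact: Imul.
      by rewrite mevalM qU ?mulr0.
    by rewrite !mevalM rq.
have stableJ : G_stable_ideal G inv act (Xc i) J.
  move=> r g [q [Iq qU rq]] Gg; have [q' [Iq' qq']] := stableI q g Iq Gg.
  have Gg' := groupV Gg; exists q'; split=> [|y Xiy].
    exists q'; split=> // y Uy; have [j [_ /Xc_sub Xy]] := Uy.
    by rewrite qq' // qU //; apply: other_components_stable.
  by rewrite qq' ?rq //; [apply: Xc_stable | apply: Xc_sub Xiy].
have [h [p0hU [y [Xiy p0hy]]]] := localize_on_component (ex_intro _ x0 (conj Xix0 p0x0)).
have nzJ : coord_ideal_nonzero (Xc i) J.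
  exists (p0 * h); split; last by exists y.
  by exists (p0 * h); split=> //; rewrite mulrC; apply: Imul.
have [r [[q [Iq qU rq]] [[z [Xiz rz]] r_inv]]] := obsXc i J idealJ stableJ nzJ.
exists q; split=> //; split=> [|g x Gg Xx].
  by exists z; split; [apply: Xc_sub Xiz | rewrite -rq].
have Gg' := groupV Gg; have [Xix | nXix] := classic (Xc i x).
  by rewrite -!rq ?r_inv //; apply: Xc_stable.
have [j Xjx] := (X_cover x).1 Xx.
have Ux : other_components i x by exists j; split=> //; apply: contra_not_neq nXix => <-.
by rewrite !qU //; apply: other_components_stable.
Qed.

End Connected.

End ActionOnComponents.

Unset Implicit Arguments.

Theorem lemma3p1 (k : closedFieldType) (N m n : nat)
  (G : ('I_N -> k) -> Prop)
  (mul : ('I_N -> k) -> ('I_N -> k) -> ('I_N -> k))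
  (inv : ('I_N -> k) -> ('I_N -> k)) (e : 'I_N -> k)
  (X : ('I_m -> k) -> Prop)
  (act : ('I_N -> k) -> ('I_m -> k) -> ('I_m -> k))
  (Xc : 'I_n -> ('I_m -> k) -> Prop) :
  is_affine_group G mul inv e ->
  zariski_connected G ->
  zariski_closed X ->
  is_regular_action G mul e X act ->
  (forall i, irreducible_component X (Xc i)) ->
  (forall i j, Xc i = Xc j -> i = j) ->
  (forall x, X x <-> exists i, Xc i x) ->
  (observable G inv act X <-> forall i, observable G inv act (Xc i)).
Proof.
move=> groupG connectedG closedX actionX componentXc Xc_inj X_cover.
split=> [obsX i | obsXc].
  exact: observable_component groupG actionX closedX componentXc Xc_inj X_cover
    connectedG i obsX.
exact: observable_of_components groupG actionX closedX componentXc Xc_inj X_cover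
  connectedG obsXc.
Qed.
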